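(* Let $f$ be a finite extension of a field $k$ with $[f:k]=n$, and suppose that $f$ is regular. Then $\bar f=F\times(\bar f\cap\bar k^{1/n})$ for some countable free abelian subgroup $F$ of $\bar f$, where $\bar f\cap\bar k^{1/n}=\{x\in\bar f:\ x^n\in\bar k\}$.
   Context: A field is called regular if it is countable and its multiplicative group is a direct product of a torsion group and a free abelian group. For a field $k$, the reduced multiplicative group is $\bar k=k^*/t(k^* )$, where $t(k^* )$ is the group of roots of unity in $k$. When $k\le f$, $\bar k$ is identified with its image $k^*t(f^* )/t(f^* )$ in $\bar f$ (the natural map is injective since $t(k^* )=k^*\cap t(f^* )$). *)

From HB Require Import structures.
From mathcomp Require Import all_boot all_order all_algebra all_field.
Set Implicit Arguments. Unset Strict Implicit. Unset Printing Implicit Defensive.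
Import Order.TTheory GRing.Theory Num.Theory.
Local Open Scope ring_scope.

(* Subsets of a field are predicates L -> Prop.  The reduced multiplicative
   group  fbar = L^x / t(L^x)  is handled through preimages: a subgroup of
   fbar is the same as a subgroup of f^* containing t(L^x). *)

Definition is_root_of_unity (L : fieldType) (x : L) : Prop :=
  exists m : nat, (0 < m)%N /\ x ^+ m = 1.

Definition mult_subgroup (L : fieldType) (G : L -> Prop) : Prop :=
  G 1 /\ (forall x, G x -> x != 0) /\
  (forall x y, G x -> G y -> G (x * y)) /\ (forall x, G x -> G x^-1).

(* G/T is a free abelian group (T a subgroup of G): there is a set B of
   elements of G whose classes form a basis of G/T, i.e. every element of G
   is, modulo T, a finite product of integer powers of distinct elements of B,
   and the only such product lying in T is the trivial one. *)
Definition free_mod (L : fieldType) (T G : L -> Prop) : Prop :=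
  exists B : L -> Prop,
    (forall b, B b -> G b) /\
    (forall x, G x -> exists s : seq (L * int),
        (forall p, p \in s -> B p.1) /\
        T (x / \prod_(p <- s) p.1 ^ p.2)) /\
    (forall s : seq (L * int),
        (forall p, p \in s -> B p.1) -> uniq (map fst s) ->
        T (\prod_(p <- s) p.1 ^ p.2) -> forall p, p \in s -> p.2 = 0).

Definition countable_set (L : Type) (A : L -> Prop) : Prop :=
  exists g : L -> nat, forall x y, A x -> A y -> g x = g y -> x = y.

Definition regular_field (L : fieldType) : Prop :=
  countable_set (fun _ : L => True) /\
  exists G : L -> Prop,
    mult_subgroup G /\
    (forall x, G x -> is_root_of_unity x -> x = 1) /\
    (forall x, x != 0 -> exists y z, G y /\ is_root_of_unity z /\ x = y * z) /\
    free_mod (fun x => x = 1) G.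

(* preimage in L^x of  fbar ∩ kbar^{1/n} = {x in fbar : x^n in kbar},
   where kbar = k^x t(L^x) / t(L^x) *)
Definition kbar_root (F : fieldType) (L : fieldExtType F) (n : nat) (x : L)
  : Prop :=
  x != 0 /\ exists (a : F) (z : L),
    a != 0 /\ is_root_of_unity z /\ x ^+ n = a%:A * z.

From HB Require Import structures.
From mathcomp Require Import all_boot all_order all_algebra all_field.
From mathcomp Require Import ring.
From Stdlib Require Import ClassicalEpsilon Wf_nat.
Import Order.TTheory GRing.Theory Num.Theory.
Local Open Scope ring_scope.
Set Implicit Arguments. Unset Strict Implicit. Unset Printing Implicit Defensive.

(* Write f^x = t(f^x) × G with G free on a basis B, enumerated through the
   countability of f.  The map psi x = x^n / N(x), N the norm of f/k, is a
   homomorphism of f^x, and psi x is a root of unity exactly when x^n lies in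
   k^x t(f^x).  Reading psi x in coordinates on B gives a homomorphism
   v : f^x -> Z^(N) whose kernel is the preimage of fbar /\ kbar^{1/n}.  Its
   image is free with a triangular basis: for each index N take an element
   vanishing above N whose N-th coordinate is the least positive one.  These
   "pivots" generate, together with t(f^x), the required complement F. *)

Lemma big_undup_fiber (R : Type) (idx : R) (op : Monoid.com_law idx)
    (I J : eqType) (s : seq I) (f : I -> J) (F : I -> R) :
  \big[op/idx]_(i <- s) F i =
  \big[op/idx]_(j <- undup (map f s)) \big[op/idx]_(i <- s | f i == j) F i.
Proof.
under [RHS]eq_bigr do rewrite big_mkcond.
rewrite exchange_big; apply: eq_big_seq => i si /=.
rewrite (bigD1_seq (f i)) ?undup_uniq ?mem_undup ?map_f //= eqxx.
by rewrite big1 ?Monoid.mulm1 // => j /negbTE; rewrite eq_sym => ->.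
Qed.

Section FormalProducts.
Variable L : fieldType.
Implicit Types (s t : seq (L * int)) (x : L).

Definition prodz s : L := \prod_(p <- s) p.1 ^ p.2.

Definition exponent s x : int := \sum_(p <- s | p.1 == x) p.2.

Definition bases_in (X : L -> Prop) s := forall p, p \in s -> X p.1.

Definition oppz s : seq (L * int) := [seq (p.1, - p.2) | p <- s].

Lemma bases_in_cat X s t : bases_in X s -> bases_in X t -> bases_in X (s ++ t).
Proof. by move=> Xs Xt p; rewrite mem_cat => /orP[/Xs | /Xt]. Qed.

Lemma bases_in_opp X s : bases_in X s -> bases_in X (oppz s).
Proof. by move=> Xs _ /mapP[p /Xs Xp ->]. Qed.

Lemma prodz_cat s t : prodz (s ++ t) = prodz s * prodz t.
Proof. exact: big_cat. Qed.

Lemma prodz_opp s : prodz (oppz s) = (prodz s)^-1.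
Proof. by rewrite /prodz big_map -prodfV; apply: eq_bigr => p _; rewrite invr_expz. Qed.

Lemma prodz_neq0 s : (forall p, p \in s -> p.1 != 0) -> prodz s != 0.
Proof.
move=> s_neq0; rewrite prodf_seq_neq0; apply/allP => p ps.
exact/expfz_neq0/s_neq0.
Qed.

Lemma exponent_uniq s p : uniq (map fst s) -> p \in s -> exponent s p.1 = p.2.
Proof.
elim: s => // q s IHs /= /andP[qNs s_uniq]; rewrite inE /exponent big_cons.
case/orP => [/eqP-> | ps].
  rewrite eqxx big1_seq ?addr0 // => r /andP[/eqP r_q /(map_f fst)].
  by rewrite r_q (negPf qNs).
rewrite -/(exponent s p.1) IHs //; case: eqP => // q_p.
by move: qNs; rewrite q_p map_f.
Qed.

Lemma prodz_exponent s : (forall p, p \in s -> p.1 != 0) ->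
  prodz s = \prod_(x <- undup (map fst s)) x ^ exponent s x.
Proof.
move=> s_neq0; rewrite /prodz (big_undup_fiber _ _ fst).
apply: eq_big_seq => x; rewrite mem_undup => /mapP[q qs ->].
have expzD a b : q.1 ^ (a + b) = q.1 ^ a * q.1 ^ b by apply/expfzDr/s_neq0.
rewrite /exponent (big_morph (fun e : int => q.1 ^ e) expzD (expr0z _)).
by apply: eq_bigr => p /eqP->.
Qed.

Lemma prodz_eq1 s : (forall p, p \in s -> p.1 != 0) ->
  (forall x, exponent s x = 0) -> prodz s = 1.
Proof. by move=> s_neq0 s0; rewrite prodz_exponent // big1 // => x _; rewrite s0 expr0z. Qed.

Lemma mult_subgroup_prodz (G : L -> Prop) s :
  mult_subgroup G -> bases_in G s -> G (prodz s).
Proof.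
case=> G1 [_ [GM GV]]; elim: s => [|p s IHs] sG; first by rewrite /prodz big_nil.
have Gp : G p.1 by apply: sG; rewrite mem_head.
have GX m : G (p.1 ^+ m) by elim: m => [|m IHm]; rewrite ?expr0 // exprS; apply: (GM).
rewrite /prodz big_cons; apply: GM; last by apply: IHs => q qs; apply: sG; rewrite inE qs orbT.
by case: p.2 => m; [apply: GX | apply: GV].
Qed.

End FormalProducts.

Section RootsOfUnity.
Variable L : fieldType.
Notation T := (@is_root_of_unity L).

Lemma root_of_unity1 : T 1.
Proof. by exists 1%N; rewrite expr1. Qed.

Lemma root_of_unity_neq0 x : T x -> x != 0.
Proof.
by case=> [[|m] [//= _ xm]]; apply: contra_eq_neq xm => ->; rewrite expr0n eq_sym oner_eq0.
Qed.

Lemma root_of_unityM x y : T x -> T y -> T (x * y).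
Proof.
case=> m [m0 xm] [k [k0 yk]]; exists (m * k)%N; split; first by rewrite muln_gt0 m0.
by rewrite exprMn exprM xm expr1n mulnC exprM yk expr1n mulr1.
Qed.

Lemma root_of_unityV x : T x -> T x^-1.
Proof. by case=> m [m0 xm]; exists m; rewrite exprVn xm invr1. Qed.

End RootsOfUnity.

Section BasisCoordinates.
Variables (L : fieldType) (g : L -> nat) (B : L -> Prop).
Notation T := (@is_root_of_unity L).
Hypothesis g_inj : injective g.
Hypothesis B_neq0 : forall b, B b -> b != 0.
Hypothesis B_span : forall y, y != 0 -> exists s, bases_in B s /\ T (y / prodz s).
Hypothesis B_indep : forall s, bases_in B s -> uniq (map fst s) -> T (prodz s) ->
  forall p, p \in s -> p.2 = 0.
Implicit Types (s t : seq (L * int)) (x y : L).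

Lemma bases_in_B_neq0 s : bases_in B s -> forall p, p \in s -> p.1 != 0.
Proof. by move=> Bs p /Bs; apply: B_neq0. Qed.

Lemma exponent_root_of_unity s : bases_in B s -> T (prodz s) -> forall x, exponent s x = 0.
Proof.
move=> Bs Ts x; set u := undup (map fst s).
set s' := [seq (y, exponent s y) | y <- u].
have u_s' : map fst s' = u by rewrite -map_comp map_id.
have Bs' : bases_in B s'.
  by move=> p /mapP[y]; rewrite mem_undup => /mapP[q /Bs Bq ->] ->.
have Ts' : T (prodz s') by rewrite /prodz big_map -prodz_exponent // => p /Bs /B_neq0.
have [xu | xNu] := boolP (x \in u).
  apply: (B_indep Bs' _ Ts' (map_f (fun y => (y, exponent s y)) xu)).
  by rewrite u_s' undup_uniq.
rewrite /exponent big1_seq // => p /andP[/eqP px ps].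
by move: xNu; rewrite mem_undup -px map_f.
Qed.

Definition coords s k : int := \sum_(p <- s | g p.1 == k) p.2.

Lemma coords_cat s t k : coords (s ++ t) k = coords s k + coords t k.
Proof. exact: big_cat. Qed.

Lemma coords_opp s k : coords (oppz s) k = - coords s k.
Proof. by rewrite /coords big_map sumrN. Qed.

Lemma coordsE s x : coords s (g x) = exponent s x.
Proof. by apply: eq_bigl => p; rewrite inj_eq. Qed.

Lemma coords_root_of_unity s k : bases_in B s -> T (prodz s) -> coords s k = 0.
Proof.
move=> Bs Ts; have [[p _ /eqP <-] | gNk] := @hasP _ (fun p : L * int => g p.1 == k) s.
  by rewrite coordsE exponent_root_of_unity.
by rewrite /coords big1_seq // => p /andP[gpk ps]; case: gNk; exists p.
Qed.

Definition represents y s := bases_in B s /\ T (y / prodz s).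

(* Coordinates modulo roots of unity on the basis [B], indexed through the
   injection [g]; [coord 0] is junk. *)
Definition repr y := epsilon (inhabits [::]) (represents y).

Definition coord y : nat -> int := coords (repr y).

Lemma repr_represents y : y != 0 -> represents y (repr y).
Proof. by move=> y0; apply: epsilon_spec; apply: B_span. Qed.

Lemma coord_represents y s : y != 0 -> represents y s -> coord y =1 coords s.
Proof.
move=> y0 [Bs Ts] k; rewrite /coord; have [Br Tr] := repr_represents y0.
set r := repr y in Br Tr *.
have s0 := prodz_neq0 (bases_in_B_neq0 Bs); have r0 := prodz_neq0 (bases_in_B_neq0 Br).
have Brs := bases_in_cat Br (bases_in_opp Bs).
have : T (prodz (r ++ oppz s)).
  have -> : prodz (r ++ oppz s) = (y / prodz s) / (y / prodz r).
    by rewrite prodz_cat prodz_opp; field; rewrite s0 r0 y0.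
  by apply: root_of_unityM => //; apply: root_of_unityV.
by move=> /(coords_root_of_unity k Brs)/eqP; rewrite coords_cat coords_opp subr_eq0 => /eqP.
Qed.

Lemma coordM x y : x != 0 -> y != 0 -> forall k, coord (x * y) k = coord x k + coord y k.
Proof.
move=> x0 y0 k; have [Bx Tx] := repr_represents x0; have [By Ty] := repr_represents y0.
have xy0 : x * y != 0 by rewrite mulf_neq0.
rewrite (coord_represents xy0 (_ : represents _ (repr x ++ repr y))) ?coords_cat //.
split; first exact: bases_in_cat.
by rewrite prodz_cat invfM mulrACA; apply: root_of_unityM.
Qed.

Lemma coord_root_of_unity y k : T y -> coord y k = 0.
Proof.
move=> Ty; have y0 := root_of_unity_neq0 Ty.
rewrite (coord_represents y0 (_ : represents _ [::])) ?[coords _ _]big_nil //.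
by split; rewrite // /prodz big_nil divr1.
Qed.

Lemma coord_eq0_root_of_unity y : y != 0 -> (forall k, coord y k = 0) -> T y.
Proof.
move=> y0 y_k0; have [By Ty] := repr_represents y0.
suff r1 : prodz (repr y) = 1 by rewrite r1 divr1 in Ty.
apply: prodz_eq1; first exact: bases_in_B_neq0 By.
by move=> x; rewrite -coordsE; apply: y_k0.
Qed.

Lemma coord_finite_support y : exists N, forall k, (N <= k)%N -> coord y k = 0.
Proof.
exists (\max_(p <- repr y) g p.1).+1 => k Nk; rewrite /coord /coords big1_seq //.
move=> p /andP[/eqP gpk ps]; move: Nk; rewrite -gpk ltnNge.
by rewrite (@leq_bigmax_seq _ _ xpredT (fun q : L * int => g q.1) _ ps).
Qed.

End BasisCoordinates.

Section Pivots.
Variables (L : fieldType) (v : L -> nat -> int).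
Notation T := (@is_root_of_unity L).
Hypothesis vM : forall x y, x != 0 -> y != 0 -> forall k, v (x * y) k = v x k + v y k.
Hypothesis v_finite : forall x, exists N, forall k, (N <= k)%N -> v x k = 0.
Implicit Types (s : seq (L * int)) (x y : L).

Lemma v1 k : v 1 k = 0.
Proof. by apply/esym/(addrI (v 1 k)); rewrite -vM ?oner_neq0 // mulr1 addr0. Qed.

Lemma vV x k : x != 0 -> v x^-1 k = - v x k.
Proof. by move=> x0; apply/eqP; rewrite -addr_eq0 addrC -vM ?invr_eq0 // divff ?v1. Qed.

Lemma vXn x (m : nat) k : x != 0 -> v (x ^+ m) k = m%:Z * v x k.
Proof.
move=> x0; elim: m => [|m IHm]; first by rewrite expr0 v1 mul0r.
by rewrite exprS vM ?expf_neq0 // IHm intS mulrDl mul1r.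
Qed.

Lemma vXz x z k : x != 0 -> v (x ^ z) k = z * v x k.
Proof. by move=> x0; case: z => m; rewrite ?NegzE ?vV ?expf_neq0 ?vXn // mulNr. Qed.

Lemma v_prodz s k : (forall p, p \in s -> p.1 != 0) ->
  v (prodz s) k = \sum_(p <- s) p.2 * v p.1 k.
Proof.
elim: s => [|p s IHs] s0; first by rewrite /prodz !big_nil v1.
have p0 : p.1 != 0 by apply: s0; rewrite mem_head.
have s0' q : q \in s -> q.1 != 0 by move=> qs; apply: s0; rewrite inE qs orbT.
by rewrite /prodz !big_cons vM ?expfz_neq0 ?prodz_neq0 // vXz // -/(prodz s) IHs.
Qed.

Lemma v_root_of_unity x k : T x -> v x k = 0.
Proof.
case=> m [m0 xm]; have x0 : x != 0 by apply: root_of_unity_neq0; exists m.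
apply/eqP; have := vXn m k x0; rewrite xm v1 => /esym/eqP.
by rewrite mulf_eq0 eqz_nat eqn0Ngt m0.
Qed.

Definition vanishes_above N x := x != 0 /\ forall k, (N < k)%N -> v x k = 0.

Lemma vanishes_aboveM N x y :
  vanishes_above N x -> vanishes_above N y -> vanishes_above N (x * y).
Proof.
move=> [x0 vx] [y0 vy]; split => [|k Nk]; first by rewrite mulf_neq0.
by rewrite vM // vx // vy.
Qed.

Lemma vanishes_above_expz N x z : vanishes_above N x -> vanishes_above N (x ^ z).
Proof. by move=> [x0 vx]; split => [|k Nk]; rewrite ?expfz_neq0 // vXz // vx // mulr0. Qed.

Lemma vanishes_aboveV N x : vanishes_above N x -> vanishes_above N x^-1.
Proof. by move=> [x0 vx]; split => [|k Nk]; rewrite ?invr_eq0 // vV // vx // oppr0. Qed.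

Definition has_pivot N := exists x, vanishes_above N x /\ 0 < v x N.

Definition pivot_spec N x := [/\ vanishes_above N x, 0 < v x N &
  forall y, vanishes_above N y -> 0 < v y N -> v x N <= v y N].

Definition pivot N := epsilon (inhabits 1) (pivot_spec N).

Lemma pivotP N : has_pivot N -> pivot_spec N (pivot N).
Proof.
move=> [y [Ny vy_gt0]]; apply: epsilon_spec.
have int_succ (z : int) : 0 < z -> exists k : nat, z = k.+1%:Z.
  by case: z => [[|k]|] // _; exists k.
pose P m := exists y, vanishes_above N y /\ v y N = m.+1%:Z.
have [k vyk] := int_succ _ vy_gt0.
have Pk : P k by exists y.
have [m [[[x [Nx vx]] m_min] _]] :=
  dec_inh_nat_subset_has_unique_least_element P (fun m => classic (P m)) (ex_intro _ k Pk).
exists x; split; rewrite ?vx // => z Nz /int_succ[l vzl].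
by rewrite vzl lez_nat ltnS; apply/ssrnat.leP/m_min; exists z.
Qed.

Lemma pivot_dvd N y : has_pivot N -> vanishes_above N y ->
  exists q, v y N = q * v (pivot N) N.
Proof.
move=> hN Ny; have [Nx d_gt0 d_min] := pivotP hN.
set x := pivot N in Nx d_gt0 d_min *; set d := v x N in d_gt0 d_min *.
set q := (v y N %/ d)%Z; set r := (v y N %% d)%Z.
exists q; have y_qr : v y N = q * d + r by apply: divz_eq.
have [r0 | r_neq0] := eqVneq r 0; first by rewrite y_qr r0 addr0.
have Nyx := vanishes_aboveM Ny (vanishes_above_expz (- q) Nx).
have vyx : v (y * x ^ (- q)) N = r.
  have [x0 _] := Nx; have [y0 _] := Ny.
  by rewrite vM ?expfz_neq0 // vXz // -/d y_qr mulNr addrAC subrr add0r.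
have : d <= r.
  by rewrite -vyx; apply: d_min; rewrite // vyx lt_def r_neq0 modz_ge0 // gt_eqF.
by rewrite leNgt ltz_pmod.
Qed.

Lemma no_pivot_vanishes N y : ~ has_pivot N -> vanishes_above N y -> v y N = 0.
Proof.
move=> hN Ny; case: (ltrgtP (v y N) 0) => // [vy_lt0 | vy_gt0]; case: hN.
  by exists y^-1; rewrite vV ?oppr_gt0; [split; first exact: vanishes_aboveV | case: Ny].
by exists y.
Qed.

Definition is_pivot x := exists N, has_pivot N /\ x = pivot N.

Lemma is_pivot_neq0 x : is_pivot x -> x != 0.
Proof. by case=> N [/pivotP[[x0 _] _ _] ->]. Qed.

Lemma pivots_span_below N y : y != 0 -> (forall k, (N <= k)%N -> v y k = 0) ->
  exists s, bases_in is_pivot s /\ forall k, v (y / prodz s) k = 0.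
Proof.
elim: N y => [|N IHN] y y0 vy.
  by exists [::]; split => // k; rewrite /prodz big_nil divr1 vy.
have Ny : vanishes_above N y by split.
have [hN | nohN] := classic (has_pivot N); last first.
  apply: IHN => // k; rewrite leq_eqVlt => /predU1P[<- | ]; last exact: vy.
  exact: no_pivot_vanishes.
have [[x0 vx] _ _] := pivotP hN; have [q vyq] := pivot_dvd hN Ny.
set x := pivot N in x0 vx vyq *; set y' := y * x ^ (- q).
have [s [Ps vs]] : exists s, bases_in is_pivot s /\ forall k, v (y' / prodz s) k = 0.
  apply: IHN => [|k]; first by rewrite mulf_neq0 ?expfz_neq0.
  rewrite /y' vM ?expfz_neq0 // vXz // mulNr leq_eqVlt => /predU1P[<- | Nk].
    by rewrite vyq subrr.
  by rewrite vx // vy // mulr0 subr0.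
exists ((x, q) :: s); split.
  by move=> p; rewrite inE => /predU1P[-> | /Ps]; [exists N |].
by move=> k; rewrite /prodz big_cons -/(prodz s) -(vs k) /y' invfM mulrA invr_expz.
Qed.

Lemma pivots_span y : y != 0 ->
  exists s, bases_in is_pivot s /\ forall k, v (y / prodz s) k = 0.
Proof. by move=> y0; have [N vyN] := v_finite y; apply: pivots_span_below vyN. Qed.

Definition pivot_below N x := exists M, [/\ (M < N)%N, has_pivot M & x = pivot M].

Lemma pivot_belowS N x :
  pivot_below N.+1 x -> pivot_below N x \/ has_pivot N /\ x = pivot N.
Proof.
move=> [M [MN hM ->]]; move: MN; rewrite ltnS leq_eqVlt => /predU1P[<- | MN]; first by right.
by left; exists M.
Qed.

Lemma bases_in_pivot_below s : bases_in is_pivot s -> exists N, bases_in (pivot_below N) s.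
Proof.
elim: s => [|q s IHs] Ps; first by exists 0%N.
have [N sN] := IHs (fun p ps => Ps p (@mem_behead _ (q :: s) p ps)).
have [M [hM qM]] := Ps q (mem_head q s).
exists (maxn N M.+1) => p; rewrite inE => /predU1P[-> | /sN[M' [M'N hM' ->]]].
  by exists M; rewrite leq_max ltnSn orbT.
by exists M'; rewrite leq_max M'N.
Qed.

(* Triangularity: among pivots below N.+1, only pivot N has a nonzero N-th
   coordinate, so its total exponent must vanish. *)
Lemma exponent_pivots_below N s : bases_in (pivot_below N) s ->
  (forall k, \sum_(p <- s) p.2 * v p.1 k = 0) -> forall x, exponent s x = 0.
Proof.
elim: N s => [|N IHN] s sN s0 x.
  by rewrite /exponent big1_seq // => p /andP[_ /sN[M []]].
have [hN | nohN] := classic (has_pivot N); last first.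
  by apply: IHN s0 x => p /sN /pivot_belowS[// | [/nohN]].
have [[xN0 vxN] d_gt0 _] := pivotP hN; set xN := pivot N in xN0 vxN d_gt0 *.
have low p : p \in s -> p.1 != xN -> pivot_below N p.1.
  by move=> /sN /pivot_belowS[// | [_ ->]]; rewrite eqxx.
have E0 : exponent s xN = 0.
  have : \sum_(p <- s) p.2 * v p.1 N = exponent s xN * v xN N.
    rewrite /exponent mulr_suml [RHS]big_mkcond; apply: eq_big_seq => p ps /=.
    have [-> // | p_xN] := eqVneq p.1 xN.
    have [M [MN hM ->]] := low p ps p_xN; have [[_ vMa] _ _] := pivotP hM.
    by rewrite vMa // mulr0.
  by rewrite s0 => /esym/eqP; rewrite mulf_eq0 (gt_eqF d_gt0) orbF => /eqP.
set s' := [seq p <- s | p.1 != xN].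
have s'N : bases_in (pivot_below N) s'.
  by move=> p; rewrite mem_filter => /andP[p_xN ps]; apply: low.
have s'0 k : \sum_(p <- s') p.2 * v p.1 k = 0.
  move: (s0 k); rewrite big_filter (bigID (fun p => p.1 == xN)) /=.
  rewrite (eq_bigr (fun p => p.2 * v xN k)) => [|p /eqP-> //].
  by rewrite -mulr_suml -/(exponent s xN) E0 mul0r add0r.
have [-> // | x_xN] := eqVneq x xN.
rewrite -(IHN s' s'N s'0 x) /exponent big_filter_cond; apply: eq_bigl => p.
by case: eqVneq => [->|]; rewrite ?x_xN ?andbF.
Qed.

Lemma exponent_pivots s : bases_in is_pivot s -> (forall k, v (prodz s) k = 0) ->
  forall x, exponent s x = 0.
Proof.
move=> Ps s0; have [N sN] := bases_in_pivot_below Ps.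
apply: (exponent_pivots_below sN) => k; rewrite -v_prodz ?s0 //.
by move=> p /Ps /is_pivot_neq0.
Qed.

Definition pivot_span x := exists s, bases_in is_pivot s /\ T (x / prodz s).

Lemma bases_in_pivot_neq0 s : bases_in is_pivot s -> forall p, p \in s -> p.1 != 0.
Proof. by move=> Ps p /Ps /is_pivot_neq0. Qed.

Lemma mult_subgroup_pivot_span : mult_subgroup pivot_span.
Proof.
split; first by exists [::]; rewrite /prodz big_nil divr1; split => //; apply: root_of_unity1.
split; first by move=> x [s [_ /root_of_unity_neq0]]; apply: contraNneq => ->; rewrite mul0r.
split => [x y [s [Ps Tx]] [t [Pt Ty]] | x [s [Ps Tx]]].
  exists (s ++ t); split; first exact: bases_in_cat.
  by rewrite prodz_cat invfM mulrACA; apply: root_of_unityM.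
exists (oppz s); split; first exact: bases_in_opp.
by rewrite prodz_opp -invfM; apply: root_of_unityV.
Qed.

Lemma root_of_unity_pivot_span x : T x -> pivot_span x.
Proof. by exists [::]; rewrite /prodz big_nil divr1. Qed.

Lemma free_mod_pivot_span : free_mod T pivot_span.
Proof.
exists is_pivot; split.
  move=> b Pb; exists [:: (b, 1)]; split; first by move=> p; rewrite inE => /eqP->.
  by rewrite /prodz big_seq1 expr1z divff ?is_pivot_neq0 //; apply: root_of_unity1.
split => [x [s sx] | s Ps s_uniq Ts p ps]; first by exists s.
rewrite -(exponent_uniq s_uniq ps); apply: exponent_pivots => // k.
exact: v_root_of_unity.
Qed.

Lemma pivot_span_ker x : pivot_span x -> (forall k, v x k = 0) -> T x.
Proof.
move=> [s [Ps Tx]] vx; have s0 := prodz_neq0 (bases_in_pivot_neq0 Ps).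
suff s1 : prodz s = 1 by rewrite s1 divr1 in Tx.
apply: prodz_eq1; first exact: bases_in_pivot_neq0.
apply: exponent_pivots => // k; have := vM (root_of_unity_neq0 Tx) s0 k.
by rewrite divfK // vx (v_root_of_unity _ Tx) add0r.
Qed.

Lemma pivot_span_decomposition x : x != 0 ->
  exists y z, [/\ pivot_span y, z != 0, forall k, v z k = 0 & x = y * z].
Proof.
move=> x0; have [s [Ps vs]] := pivots_span x0.
have s0 := prodz_neq0 (bases_in_pivot_neq0 Ps).
exists (prodz s), (x / prodz s); split => //; last by rewrite mulrC divfK.
  by exists s; rewrite divff //; split => //; apply: root_of_unity1.
by rewrite mulf_neq0 ?invr_eq0.
Qed.

End Pivots.

Lemma regular_free_mod (L : fieldType) :
  regular_field L -> free_mod (@is_root_of_unity L) (fun x => x != 0).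
Proof.
case=> _ [G [G_sub [GT1 [G_split [B [BG [B_span B_indep]]]]]]].
have G_neq0 : forall x, G x -> x != 0 by case: G_sub => _ [].
exists B; split; first by move=> b /BG /G_neq0.
split=> [x x0 | s Bs s_uniq Ts].
  have [y [z [Gy [Tz ->]]]] := G_split x x0; have [s [Bs ys]] := B_span y Gy.
  by exists s; split => //; rewrite mulrAC ys mul1r.
apply: B_indep => //; apply: (GT1 _ _ Ts).
by apply: mult_subgroup_prodz G_sub _ => p /Bs /BG.
Qed.

Section FieldNorm.
Variables (F : fieldType) (L : fieldExtType F).
Notation n := (\dim {:L}).
Notation T := (@is_root_of_unity L).
Import passmx.

Definition fnorm (x : L) : F := \det (mxof (vbasis {:L}) (vbasis {:L}) (amulr x)).

Lemma fnormM x y : fnorm (x * y) = fnorm x * fnorm y.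
Proof.
by rewrite /fnorm rmorphM -FalgLfun.lfun_compE (mxof_comp _ _ (vbasisP fullv)) det_mulmx.
Qed.

Lemma fnorm_alg a : fnorm (a%:A) = a ^+ n.
Proof.
rewrite /fnorm linearZ rmorph1 linearZ /= mxof1 ?scalemx1 ?det_scalar //.
exact: basis_free (vbasisP fullv).
Qed.

Lemma fnorm1 : fnorm 1 = 1.
Proof. by rewrite -(scale1r (1 : L)) fnorm_alg expr1n. Qed.

Lemma fnormX x m : fnorm (x ^+ m) = fnorm x ^+ m.
Proof. by elim: m => [|m IHm]; rewrite ?fnorm1 // !exprS fnormM IHm. Qed.

Lemma fnorm_neq0 x : x != 0 -> fnorm x != 0.
Proof.
move=> x0; apply: contraNneq (oner_neq0 F) => Nx0.
by rewrite -fnorm1 -(divff x0) fnormM Nx0 mul0r.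
Qed.

Definition xn_div_norm x : L := x ^+ n / in_alg L (fnorm x).

Lemma xn_div_normM x y : xn_div_norm (x * y) = xn_div_norm x * xn_div_norm y.
Proof. by rewrite /xn_div_norm fnormM rmorphM exprMn invfM mulrACA. Qed.

Lemma xn_div_norm_neq0 x : x != 0 -> xn_div_norm x != 0.
Proof. by move=> x0; rewrite mulf_neq0 ?invr_eq0 ?fmorph_eq0 ?fnorm_neq0 ?expf_neq0. Qed.

Lemma kbar_rootE x : kbar_root n x <-> x != 0 /\ T (xn_div_norm x).
Proof.
split=> [[x0 [a [z [a0 [[m [m_gt0 zm]] xn]]]]] | [x0 Tx]]; last first.
  split=> //; exists (fnorm x), (xn_div_norm x); split; rewrite ?fnorm_neq0 //.
  by rewrite mulrC divfK ?fmorph_eq0 ?fnorm_neq0.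
split=> //; set w := a / fnorm x.
have Nx0 := fnorm_neq0 x0.
have psi_x : xn_div_norm x = in_alg L w * z by rewrite /xn_div_norm xn rmorphM fmorphV mulrAC.
have wn : w ^+ n = (fnorm z)^-1.
  have Nxn : fnorm x ^+ n = a ^+ n * fnorm z by rewrite -fnormX xn fnormM fnorm_alg.
  by rewrite /w exprMn exprVn Nxn invfM mulrA divff ?expf_neq0 ?mul1r.
exists (n * m)%N; split; first by rewrite muln_gt0 adim_gt0.
rewrite psi_x exprMn !exprM -!rmorphXn wn exprVn -fnormX zm fnorm1 invr1 rmorph1 mul1r.
by rewrite -exprM mulnC exprM zm expr1n.
Qed.

End FieldNorm.

Theorem lemma2p2 (F : fieldType) (L : fieldExtType F) (n : nat)
  (hn : \dim {: L} = n) (hreg : regular_field L) :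
  exists Ft : L -> Prop,
    mult_subgroup Ft /\
    (forall x, is_root_of_unity x -> Ft x) /\
    countable_set Ft /\
    free_mod (@is_root_of_unity L) Ft /\
    (forall x, Ft x -> kbar_root n x -> is_root_of_unity x) /\
    (forall x, x != 0 -> exists y z, Ft y /\ kbar_root n z /\ x = y * z).
Proof.
subst n; have [[g g_inj] _] := hreg.
have {}g_inj : injective g by move=> x y; apply: g_inj.
have [B [B_neq0 [B_span B_indep]]] := regular_free_mod hreg.
pose v x := coord g B (xn_div_norm x).
have vM x y : x != 0 -> y != 0 -> forall k, v (x * y) k = v x k + v y k.
  move=> x0 y0 k; rewrite /v xn_div_normM.
  by rewrite (coordM g_inj B_neq0 B_span B_indep) ?xn_div_norm_neq0.
have v_finite x : exists N, forall k, (N <= k)%N -> v x k = 0 by apply: coord_finite_support.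
have kbar_v x : kbar_root (\dim {:L}) x <-> x != 0 /\ forall k, v x k = 0.
  rewrite kbar_rootE; split=> [[x0 Tx] | [x0 vx]]; split=> //.
    by move=> k; apply: (coord_root_of_unity g_inj B_neq0 B_span B_indep).
  exact: (coord_eq0_root_of_unity g_inj B_neq0 B_span (xn_div_norm_neq0 x0) vx).
exists (pivot_span v); split; first exact: mult_subgroup_pivot_span.
split; first exact: root_of_unity_pivot_span.
split; first by exists g => x y _ _; apply: g_inj.
split; first exact: free_mod_pivot_span vM.
split; first by move=> x Fx /kbar_v[_ vx]; exact: (pivot_span_ker vM Fx vx).
move=> x x0; have [y [z [Fy z0 vz ->]]] := pivot_span_decomposition vM v_finite x0.
by exists y, z; rewrite kbar_v.
Qed.
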